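(* System 3 has exactly four fixed points, the double poles $p_{\varepsilon_1,\varepsilon_2}=((0,0,\varepsilon_11),(0,0,\varepsilon_21))$, $\varepsilon_1,\varepsilon_2\in\{+,-\}$. The fixed points $p_{+,+}$, $p_{+,-}$ and $p_{-,+}$ are non-degenerate of elliptic-elliptic type for all $t\in[0,1]$, while $p_{-,-}$ is non-degenerate of elliptic-elliptic type if $t<t^-$ or $t>t^+$, non-degenerate of focus-focus type if $t^-<t<t^+$, and degenerate if $t\in\{t^-,t^+\}$, where $$t^\pm=\frac{R_2}{2R_2+R_1\mp2\sqrt{R_1R_2}}.$$
   Context: Let $0<R_1<R_2$ and $t\in[0,1]$. On $M=S^2\times S^2$ with Cartesian coordinates $(x_i,y_i,z_i)$, $x_i^2+y_i^2+z_i^2=1$, and cylindrical coordinates $(\theta_i,z_i)$, $\theta_i=\arg(x_i+iy_i)$, System 3 is the $b$-integrable system with $Z=\{z_2=0\}$, $b$-symplectic form $\omega=R_1\,dz_1\wedge d\theta_1+R_2\frac{dz_2}{z_2}\wedge d\theta_2$ (in the local chart $(x_1,y_1,x_2,y_2)$ on $\{\varepsilon_1z_1>0,\varepsilon_2z_2>0\}$: $\omega=-\varepsilon_1\frac{R_1}{\sqrt{1-x_1^2-y_1^2}}dx_1\wedge dy_1-\frac{R_2}{1-x_2^2-y_2^2}dx_2\wedge dy_2$), and $L=R_1z_1+R_2\log|z_2|$, $H=(1-t)z_1+t(x_1x_2+y_1y_2+z_1z_2)$. A fixed point is a point where $dL=dH=0$. A fixed point $p$ with $\Omega$ the matrix of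 $\omega$ at $p$ is non-degenerate if $A_L=\Omega^{-1}d^2L(p)$, $A_H=\Omega^{-1}d^2H(p)$ span a Cartan subalgebra of $\mathfrak{sp}(4,\mathbb R)$; it is elliptic-elliptic if some combination $c_1A_L+c_2A_H$ has four distinct eigenvalues $\pm i\alpha,\pm i\beta$ ($\alpha\ne\beta$ nonzero reals) and focus-focus if such a combination has eigenvalues $\pm\alpha\pm i\beta$ with $\alpha,\beta$ nonzero reals. *)

From mathcomp Require Import all_boot all_order all_algebra.
From mathcomp Require Import all_classical all_reals all_analysis.
From mathcomp.real_closed Require Import complex.
Set Implicit Arguments. Unset Strict Implicit. Unset Printing Implicit Defensive.
Import Order.TTheory GRing.Theory Num.Theory.
Local Open Scope ring_scope.

Section System3.
Variable R : realType.

(* A point of R^6 is a row vector (x1, y1, z1, x2, y2, z2). *)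
Definition co6 (p : 'rV[R]_6) (k : nat) : R := p ord0 (inord k).
Definition co4 (q : 'rV[R]_4) (k : nat) : R := q ord0 (inord k).

Definition mk6 (a b c d e f : R) : 'rV[R]_6 :=
  \row_(i < 6) nth 0 [:: a; b; c; d; e; f] i.

Definition onM (p : 'rV[R]_6) : Prop :=
  co6 p 0 ^+ 2 + co6 p 1 ^+ 2 + co6 p 2 ^+ 2 = 1 /\
  co6 p 3 ^+ 2 + co6 p 4 ^+ 2 + co6 p 5 ^+ 2 = 1.

Definition tangentM (p w : 'rV[R]_6) : Prop :=
  co6 w 0 * co6 p 0 + co6 w 1 * co6 p 1 + co6 w 2 * co6 p 2 = 0 /\
  co6 w 3 * co6 p 3 + co6 w 4 * co6 p 4 + co6 w 5 * co6 p 5 = 0.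

Definition inZ (p : 'rV[R]_6) : Prop := co6 p 5 = 0.

(* A b-function  f + c log|z2|  with f smooth (given by an expression on R^6
   whose restriction to M is meant) and c a constant. *)
Record bfun := BFun { bsmooth : 'rV[R]_6 -> R ; blog : R }.

Definition bval (F : bfun) (p : 'rV[R]_6) : R :=
  bsmooth F p + blog F * ln `|co6 p 5|.

(* Off Z the b-cotangent space is the usual cotangent space: dF(p) = 0 on T_pM.
   On Z, in the b-cotangent basis (dz2/z2, dw) (w coordinates of Z), one has
   dF = c (dz2/z2) + (d f restricted to T_pZ), so it vanishes iff c = 0 and
   df vanishes on T_pZ. *)
Definition b_crit (F : bfun) (p : 'rV[R]_6) : Prop :=
  if co6 p 5 != 0 then
    forall w, tangentM p w -> 'D_w (bval F) p = 0
  else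
    blog F = 0 /\
    forall w, tangentM p w -> co6 w 5 = 0 -> 'D_w (bsmooth F) p = 0.

Definition Lsys (R1 R2 : R) : bfun := BFun (fun p => R1 * co6 p 2) R2.
Definition Hsys (t : R) : bfun :=
  BFun (fun p => (1 - t) * co6 p 2 +
                 t * (co6 p 0 * co6 p 3 + co6 p 1 * co6 p 4 + co6 p 2 * co6 p 5)) 0.

Definition fixed_point (R1 R2 t : R) (p : 'rV[R]_6) : Prop :=
  onM p /\ b_crit (Lsys R1 R2) p /\ b_crit (Hsys t) p.

Definition sgnb (e : bool) : R := if e then 1 else -1.

(* the double pole p_{e1,e2} = ((0,0,e1),(0,0,e2)),  true = +, false = - *)
Definition pole (e1 e2 : bool) : 'rV[R]_6 := mk6 0 0 (sgnb e1) 0 0 (sgnb e2).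

Definition chart_inv (e1 e2 : bool) (q : 'rV[R]_4) : 'rV[R]_6 :=
  mk6 (co4 q 0) (co4 q 1) (sgnb e1 * Num.sqrt (1 - co4 q 0 ^+ 2 - co4 q 1 ^+ 2))
      (co4 q 2) (co4 q 3) (sgnb e2 * Num.sqrt (1 - co4 q 2 ^+ 2 - co4 q 3 ^+ 2)).

Definition chart_pole : 'rV[R]_4 := 0.

Definition ebasis (i : 'I_4) : 'rV[R]_4 := delta_mx 0 i.

Definition hessian (g : 'rV[R]_4 -> R) (q : 'rV[R]_4) : 'M[R]_4 :=
  \matrix_(i < 4, j < 4) 'D_(ebasis j) (fun r => 'D_(ebasis i) g r) q.

(* matrix Omega_{ij} = omega(d_i, d_j) of
   omega = -e1 R1/sqrt(1-x1^2-y1^2) dx1/\dy1 - R2/(1-x2^2-y2^2) dx2/\dy2 *)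
Definition Omega (R1 R2 : R) (e1 : bool) (q : 'rV[R]_4) : 'M[R]_4 :=
  let a := - (sgnb e1 * R1 / Num.sqrt (1 - co4 q 0 ^+ 2 - co4 q 1 ^+ 2)) in
  let b := - (R2 / (1 - co4 q 2 ^+ 2 - co4 q 3 ^+ 2)) in
  \matrix_(i < 4, j < 4)
    (if (i == 0 :> nat) && (j == 1 :> nat) then a
     else if (i == 1 :> nat) && (j == 0 :> nat) then - a
     else if (i == 2 :> nat) && (j == 3 :> nat) then b
     else if (i == 3 :> nat) && (j == 2 :> nat) then - b
     else 0).

Definition Amat (R1 R2 : R) (e1 e2 : bool) (F : bfun) : 'M[R]_4 :=
  invmx (Omega R1 R2 e1 chart_pole) *m
  hessian (fun q => bval F (chart_inv e1 e2 q)) chart_pole.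

Definition lieb (X Y : 'M[R]_4) : 'M[R]_4 := X *m Y - Y *m X.

(* sp(4,R) realised as the symplectic Lie algebra of the form Omega *)
Definition in_sp (Om X : 'M[R]_4) : Prop := X^T *m Om + Om *m X = 0.

Definition span2 (A B X : 'M[R]_4) : Prop := exists c1 c2 : R, X = c1 *: A + c2 *: B.

Definition cartan_subalgebra (Om : 'M[R]_4) (h : 'M[R]_4 -> Prop) : Prop :=
  (forall X, h X -> in_sp Om X) /\
  (forall X Y, h X -> h Y -> h (X + Y)) /\
  (forall c X, h X -> h (c *: X)) /\ h 0 /\
  (forall X Y, h X -> h Y -> h (lieb X Y)) /\
  (exists k : nat, forall (xs : seq 'M[R]_4) (Y : 'M[R]_4),
      size xs = k -> (forall X, X \in xs -> h X) -> h Y ->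
      foldr lieb Y xs = 0) /\
  (forall X, in_sp Om X -> (forall Y, h Y -> h (lieb X Y)) -> h X).

Definition nondeg_fixed_point (R1 R2 t : R) (e1 e2 : bool) : Prop :=
  cartan_subalgebra (Omega R1 R2 e1 chart_pole)
    (span2 (Amat R1 R2 e1 e2 (Lsys R1 R2)) (Amat R1 R2 e1 e2 (Hsys t))).

Definition ceig (M : 'M[R]_4) (l : R[i]) : Prop :=
  eigenvalue (map_mx (fun x : R => (x%:C)%C) M) l.

Definition is_EE_matrix (M : 'M[R]_4) : Prop :=
  exists al be : R, al != 0 /\ be != 0 /\ al != be /\
    uniq [:: Complex 0 al; Complex 0 (- al); Complex 0 be; Complex 0 (- be)] /\
    forall l, ceig M l <->
      l \in [:: Complex 0 al; Complex 0 (- al); Complex 0 be; Complex 0 (- be)].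

Definition is_FF_matrix (M : 'M[R]_4) : Prop :=
  exists al be : R, al != 0 /\ be != 0 /\
    forall l, ceig M l <->
      l \in [:: Complex al be; Complex al (- be); Complex (- al) be; Complex (- al) (- be)].

Definition elliptic_elliptic (R1 R2 t : R) (e1 e2 : bool) : Prop :=
  exists c1 c2 : R, is_EE_matrix (c1 *: Amat R1 R2 e1 e2 (Lsys R1 R2) +
                                  c2 *: Amat R1 R2 e1 e2 (Hsys t)).

Definition focus_focus (R1 R2 t : R) (e1 e2 : bool) : Prop :=
  exists c1 c2 : R, is_FF_matrix (c1 *: Amat R1 R2 e1 e2 (Lsys R1 R2) +
                                  c2 *: Amat R1 R2 e1 e2 (Hsys t)).

Definition t_minus (R1 R2 : R) : R := R2 / (2 * R2 + R1 + 2 * Num.sqrt (R1 * R2)).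
Definition t_plus (R1 R2 : R) : R := R2 / (2 * R2 + R1 - 2 * Num.sqrt (R1 * R2)).

End System3.

From mathcomp Require Import all_boot all_order all_algebra.
From mathcomp Require Import all_classical all_reals all_analysis.
From mathcomp.real_closed Require Import complex.
From mathcomp Require Import ring lra.
Import Order.TTheory GRing.Theory Num.Theory.
Local Open Scope ring_scope.
Set Implicit Arguments. Unset Strict Implicit. Unset Printing Implicit Defensive.

(* Off Z the b-differential of L = R1 z1 + R2 log|z2| can only
   vanish where x1 = y1 = 0 and x2 = y2 = 0, i.e. at the four double poles;
   on Z it never vanishes since its log-coefficient is R2 <> 0.  At the poles
   dH vanishes too, because every tangent vector has dz1 = dz2 = 0.

   In the chart (x1,y1,x2,y2) at a pole every matrix involved
   is a 2x2 block matrix: the Hessians are n (x) 1 and Omega = diag(d0,d1) (x) J,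
   so A_L = 1 (x) J and A_H = M (x) J for an explicit real 2x2 matrix M.  With
   disc M = (m00 - m11)^2 + 4 m01 m10 the discriminant of M:
   - span(A_L, A_H) is a Cartan subalgebra of sp(Omega) iff disc M <> 0;
   - the eigenvalues of c1 A_L + c2 A_H are +-i times those of c1 + c2 M, so
     disc M > 0 yields elliptic-elliptic and disc M < 0 focus-focus type.
   Finally disc M > 0 at p_{+,+}, p_{+,-}, p_{-,+}, while at p_{-,-} it is a
   positive multiple of (t^- - t)(t^+ - t). *)

Section Matrix44.
Variable R : realType.

Definition mx44 (f : nat -> nat -> R) : 'M[R]_4 := \matrix_(i < 4, j < 4) f i j.

Lemma sum4 (T : nmodType) (F : 'I_4 -> T) :
  \sum_(k < 4) F k = F (inord 0) + F (inord 1) + F (inord 2) + F (inord 3).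
Proof.
rewrite !big_ord_recl big_ord0 addr0 !addrA.
by congr (_ + _ + _ + _); apply: congr1; apply: val_inj; rewrite /= inordK.
Qed.

Lemma mx44_eq (A B : 'M[R]_4) :
  (forall a b : nat, (a < 4)%N -> (b < 4)%N ->
     A (inord a) (inord b) = B (inord a) (inord b)) -> A = B.
Proof.
move=> H; apply/matrixP => i j.
by have := H i j (ltn_ord i) (ltn_ord j); rewrite !inord_val.
Qed.

End Matrix44.

Ltac mx44_entrywise := apply: mx44_eq;
  case=> [|[|[|[|?]]]]; case=> [|[|[|[|?]]]] //= _ _;
  rewrite ?mxE ?sum4 ?mxE ?inordK //=.

Section BlockMatrices.
Variable R : realType.
Implicit Types n : nat -> nat -> R.

(* With the coordinates ordered (x1, y1, x2, y2), a 2x2 matrix n (indexed by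
   0, 1) gives the Kronecker products blkJ n = n (x) J, J = [0 -1; 1 0], and
   blkI n = n (x) 1.  At the poles Omega, A_L and A_H are of the first kind
   and the Hessians of L and H of the second. *)
Definition blkJ n : 'M[R]_4 := mx44 (fun i j => if odd i == odd j then 0
  else if odd i then n i./2 j./2 else - n i./2 j./2).
Definition blkI n : 'M[R]_4 := mx44 (fun i j =>
  if odd i == odd j then n i./2 j./2 else 0).

Definition mul22 n n' : nat -> nat -> R :=
  fun k l => n k 0%N * n' 0%N l + n k 1%N * n' 1%N l.
Definition mx22 (a b c d : R) : nat -> nat -> R := fun k l =>
  if k == 0%N then (if l == 0%N then a else b) else (if l == 0%N then c else d).
Definition id22 := mx22 1 0 0 1.
Definition diag22 (d0 d1 : R) := mx22 d0 0 0 d1.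
Definition lin22 (c1 c2 : R) n : nat -> nat -> R :=
  fun k l => c1 * id22 k l + c2 * n k l.
Definition zero22 : nat -> nat -> R := fun _ _ => 0.

Lemma blkJ_mul_blkI n n' : blkJ n *m blkI n' = blkJ (mul22 n n').
Proof. rewrite /blkJ /blkI; mx44_entrywise; rewrite /mul22 /=; ring. Qed.

Lemma blkJ_comb c1 c2 n : c1 *: blkJ id22 + c2 *: blkJ n = blkJ (lin22 c1 c2 n).
Proof. rewrite /blkJ /lin22 /id22 /mx22; mx44_entrywise; ring. Qed.

Lemma blkJ_ext n n' :
  (forall k l : nat, (k < 2)%N -> (l < 2)%N -> n k l = n' k l) -> blkJ n = blkJ n'.
Proof. by move=> h; rewrite /blkJ; mx44_entrywise; rewrite ?h. Qed.

Lemma blkJ0 : blkJ zero22 = 0.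
Proof. by rewrite /blkJ /zero22; mx44_entrywise; rewrite ?oppr0 ?if_same. Qed.

Lemma blkI0 : blkI zero22 = 0.
Proof. by rewrite /blkI /zero22; mx44_entrywise; rewrite ?if_same. Qed.

Lemma blk_inj n n' m m' : blkJ n + blkI n' = blkJ m + blkI m' ->
  forall k l : nat, (k < 2)%N -> (l < 2)%N -> n k l = m k l /\ n' k l = m' k l.
Proof.
move=> E k l hk hl.
have e1 := congr1 (fun A : 'M[R]_4 => A (inord (k.*2.+1)) (inord (l.*2))) E.
have e2 := congr1 (fun A : 'M[R]_4 => A (inord (k.*2)) (inord (l.*2))) E.
move: e1 e2 {E}; move: hk hl; case: k => [|[|]] //; case: l => [|[|]] // _ _;
  rewrite /blkJ /blkI !mxE !inordK //= ?addr0 ?add0r //.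
Qed.

Lemma lieb_blk (xx xy M : nat -> nat -> R) : lieb (blkI xx + blkJ xy) (blkJ M) =
  blkJ (fun k l => mul22 xx M k l - mul22 M xx k l) +
  blkI (fun k l => mul22 M xy k l - mul22 xy M k l).
Proof. rewrite /lieb /blkJ /blkI /mul22; mx44_entrywise; ring. Qed.

Lemma lieb_blkI_blkJ (xx N : nat -> nat -> R) :
  lieb (blkI xx) (blkJ N) = blkJ (fun k l => mul22 xx N k l - mul22 N xx k l).
Proof. rewrite /lieb /blkJ /blkI /mul22; mx44_entrywise; ring. Qed.

Lemma sp_form_blk (xx xy : nat -> nat -> R) d0 d1 :
  (blkI xx + blkJ xy)^T *m blkJ (diag22 d0 d1) + blkJ (diag22 d0 d1) *m (blkI xx + blkJ xy) =
  blkJ (fun k l => mul22 (fun a b => xx b a) (diag22 d0 d1) k l + mul22 (diag22 d0 d1) xx k l) +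
  blkI (fun k l => mul22 (fun a b => xy b a) (diag22 d0 d1) k l - mul22 (diag22 d0 d1) xy k l).
Proof. rewrite /blkJ /blkI /mul22 /diag22 /mx22; mx44_entrywise; ring. Qed.

Definition blkI_part (X : 'M[R]_4) : nat -> nat -> R := fun k l =>
  X (inord (if k == 0%N then 0%N else 2%N)) (inord (if l == 0%N then 0%N else 2%N)).
Definition blkJ_part (X : 'M[R]_4) : nat -> nat -> R := fun k l =>
  X (inord (if k == 0%N then 1%N else 3%N)) (inord (if l == 0%N then 0%N else 2%N)).

(* A matrix whose bracket with 1 (x) J lies in span(1 (x) J, M (x) J)
   commutes with 1 (x) J, hence is a block matrix. *)
Lemma blk_decomp (X : 'M[R]_4) M p q :
  lieb X (blkJ id22) = p *: blkJ id22 + q *: blkJ M ->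
  X = blkI (blkI_part X) + blkJ (blkJ_part X).
Proof.
move=> H.
have hE (a b : nat) : (lieb X (blkJ id22)) (inord a) (inord b) =
   (p *: blkJ id22 + q *: blkJ M) (inord a) (inord b) by rewrite H.
have H00 := hE 0%N 0%N; have H01 := hE 0%N 1%N; have H10 := hE 1%N 0%N.
have H02 := hE 0%N 2%N; have H03 := hE 0%N 3%N; have H12 := hE 1%N 2%N.
have H20 := hE 2%N 0%N; have H21 := hE 2%N 1%N; have H30 := hE 3%N 0%N.
have H22 := hE 2%N 2%N; have H23 := hE 2%N 3%N; have H32 := hE 3%N 2%N.
move: H00 H01 H10 H02 H03 H12 H20 H21 H30 H22 H23 H32.
rewrite /lieb /blkJ /id22 /mx22 ?mxE ?sum4 ?mxE ?inordK //=.
move=> H00 H01 H10 H02 H03 H12 H20 H21 H30 H22 H23 H32.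
rewrite /blkI /blkJ /blkI_part /blkJ_part; mx44_entrywise; lra.
Qed.

End BlockMatrices.
Arguments id22 {R}.
Arguments zero22 {R}.

Local Notation disc22 m00 m01 m10 m11 := ((m00 - m11) ^+ 2 + 4 * (m01 * m10)).

Section CartanCriterion.
Variable R : realType.

(* Normalizer equations, 1-part: if A is Omega-skew (Omega = diag(d0,d1) J,
   M Omega-symmetric) and [A, M] lies in span(1, M), then A = 0, provided
   M has distinct eigenvalues. *)
Lemma normalizer_blkI_part (d0 d1 m00 m01 m10 m11 p q a00 a01 a10 a11 : R) :
  d0 != 0 -> d1 != 0 -> d0 * m01 = d1 * m10 -> disc22 m00 m01 m10 m11 != 0 ->
  d0 * a00 = 0 -> d1 * a11 = 0 -> a10 * d1 + d0 * a01 = 0 ->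
  a00 * m00 + a01 * m10 - (m00 * a00 + m01 * a10) = p + q * m00 ->
  a00 * m01 + a01 * m11 - (m00 * a01 + m01 * a11) = q * m01 ->
  a10 * m00 + a11 * m10 - (m10 * a00 + m11 * a10) = q * m10 ->
  a10 * m01 + a11 * m11 - (m10 * a01 + m11 * a11) = p + q * m11 ->
  [/\ a00 = 0, a01 = 0, a10 = 0 & a11 = 0].
Proof.
move=> hd0 hd1 hm hdisc h00 h11 h01 E00 E01 E10 E11.
have a00z : a00 = 0 by move: h00 => /eqP; rewrite mulf_eq0 (negbTE hd0) /= => /eqP.
have a11z : a11 = 0 by move: h11 => /eqP; rewrite mulf_eq0 (negbTE hd1) /= => /eqP.
subst a00 a11.
have k1 : d1 * (4 * m10 * a01) = d1 * (q * (m00 - m11)).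
  have := congr1 (fun z => d1 * z) E00; have := congr1 (fun z => d1 * z) E11.
  have := congr1 (fun z => m01 * z) h01; have := congr1 (fun z => a01 * z) hm.
  rewrite /=; lra.
have {}k1 : 4 * m10 * a01 = q * (m00 - m11) by apply: (mulfI hd1).
have qdisc : q * disc22 m00 m01 m10 m11 = 0.
  have := congr1 (fun z => (m00 - m11) * z) k1.
  have := congr1 (fun z => 4 * m10 * z) E01.
  rewrite /=; lra.
have qz : q = 0 by move: qdisc => /eqP; rewrite mulf_eq0 (negbTE hdisc) orbF => /eqP.
subst q.
have a01z : a01 = 0.
  have [//|ha] := eqVneq a01 0; exfalso.
  have m10z : m10 = 0.
    have : m10 * a01 = 0 by lra.
    by move/eqP; rewrite mulf_eq0 (negbTE ha) orbF => /eqP.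
  have dz : m00 - m11 = 0.
    have : (m00 - m11) * a01 = 0 by lra.
    by move/eqP; rewrite mulf_eq0 (negbTE ha) orbF => /eqP.
  by move: hdisc; rewrite dz m10z expr0n /= mulr0 mulr0 addr0 eqxx.
subst a01; split => //.
by move: h01 => /eqP; rewrite mulr0 addr0 mulf_eq0 (negbTE hd1) orbF => /eqP.
Qed.

(* Normalizer equations, J-part: an Omega-symmetric B commuting with M lies
   in span(1, M) when M has distinct eigenvalues. *)
Lemma commutant22 (d0 d1 m00 m01 m10 m11 b00 b01 b10 b11 : R) :
  d1 != 0 -> d0 * m01 = d1 * m10 -> disc22 m00 m01 m10 m11 != 0 ->
  b10 * d1 = d0 * b01 ->
  m00 * b01 + m01 * b11 - (b00 * m01 + b01 * m11) = 0 ->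
  m10 * b00 + m11 * b10 - (b10 * m00 + b11 * m10) = 0 ->
  exists u v, [/\ b00 = u + v * m00, b01 = v * m01, b10 = v * m10 & b11 = u + v * m11].
Proof.
move=> hd1 hm hdisc hb F01 F10.
have [m01z|m01n] := eqVneq m01 0.
  subst m01.
  have m10z : m10 = 0.
    by move: hm => /eqP; rewrite mulr0 eq_sym mulf_eq0 (negbTE hd1) /= => /eqP.
  subst m10.
  have dn : m00 - m11 != 0.
    by apply: contraNneq hdisc => ->; rewrite expr0n /= !mulr0 addr0.
  have b01z : b01 = 0.
    have : (m00 - m11) * b01 = 0 by lra.
    by move/eqP; rewrite mulf_eq0 (negbTE dn) /= => /eqP.
  have b10z : b10 = 0.
    have : (m00 - m11) * b10 = 0 by lra.
    by move/eqP; rewrite mulf_eq0 (negbTE dn) /= => /eqP.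
  exists (b00 - (b00 - b11) / (m00 - m11) * m00), ((b00 - b11) / (m00 - m11)).
  rewrite b01z b10z !mulr0; split; [ring | by [] | by [] | by field].
have e10 : b10 * m01 = b01 * m10.
  apply: (mulfI hd1).
  have := congr1 (fun z => m01 * z) hb; have := congr1 (fun z => b01 * z) hm.
  rewrite /=; lra.
exists (b00 - b01 / m01 * m00), (b01 / m01); split.
- ring.
- by field.
- by apply: (mulIf m01n); rewrite e10; field.
- apply: (mulIf m01n).
  have -> : (b00 - b01 / m01 * m00 + b01 / m01 * m11) * m01 =
            b00 * m01 - b01 * m00 + b01 * m11 by field.
  lra.
Qed.

Lemma span2_comb (M : nat -> nat -> R) Y :
  span2 (blkJ id22) (blkJ M) Y <-> exists c1 c2, Y = blkJ (lin22 c1 c2 M).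
Proof. by split=> -[c1 [c2 ->]]; exists c1, c2; rewrite blkJ_comb. Qed.

Variables (d0 d1 m00 m01 m10 m11 : R).
Hypotheses (hd0 : d0 != 0) (hd1 : d1 != 0) (hm : d0 * m01 = d1 * m10).
Let M := mx22 m00 m01 m10 m11.

Lemma comb_in_sp c1 c2 : in_sp (blkJ (diag22 d0 d1)) (blkJ (lin22 c1 c2 M)).
Proof.
have h := congr1 (fun z => c2 * z) hm; rewrite /= in h.
rewrite /in_sp /blkJ /diag22 /lin22 /id22 /M /mx22; mx44_entrywise; lra.
Qed.

Lemma comb_commute c1 c2 c1' c2' :
  lieb (blkJ (lin22 c1 c2 M)) (blkJ (lin22 c1' c2' M)) = 0.
Proof. rewrite /lieb /blkJ /lin22 /id22 /M /mx22; mx44_entrywise; ring. Qed.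

(* Self-normalization: an element of sp(Omega) normalizing the span lies in
   it; by blk_decomp it is a block matrix, and the two normalizer lemmas
   apply to its 1-part and J-part. *)
Lemma comb_self_normalizing (X : 'M[R]_4) :
  disc22 m00 m01 m10 m11 != 0 -> in_sp (blkJ (diag22 d0 d1)) X ->
  (forall Y, span2 (blkJ id22) (blkJ M) Y -> span2 (blkJ id22) (blkJ M) (lieb X Y)) ->
  span2 (blkJ id22) (blkJ M) X.
Proof.
move=> hdisc hsp hN.
have [p1 [q1 HL]] : span2 (blkJ id22) (blkJ M) (lieb X (blkJ id22)).
  by apply: hN; exists 1, 0; rewrite scale1r scale0r addr0.
have [p2 [q2 HH]] : span2 (blkJ id22) (blkJ M) (lieb X (blkJ M)).
  by apply: hN; exists 0, 1; rewrite scale1r scale0r add0r.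
have XE := blk_decomp HL.
move: HH; rewrite XE lieb_blk blkJ_comb -[X in _ = X]addr0 -blkI0 => HH.
move: hsp; rewrite /in_sp XE sp_form_blk -[X in _ = X]addr0 -{1}blkJ0 -blkI0 => hsp.
have [A00 B00] := blk_inj HH (k:=0) (l:=0) isT isT.
have [A01 B01] := blk_inj HH (k:=0) (l:=1) isT isT.
have [A10 B10] := blk_inj HH (k:=1) (l:=0) isT isT.
have [A11 B11] := blk_inj HH (k:=1) (l:=1) isT isT.
have [S00 T00] := blk_inj hsp (k:=0) (l:=0) isT isT.
have [S01 T01] := blk_inj hsp (k:=0) (l:=1) isT isT.
have [S10 T10] := blk_inj hsp (k:=1) (l:=0) isT isT.
have [S11 T11] := blk_inj hsp (k:=1) (l:=1) isT isT.
rewrite /diag22 /mul22 /lin22 /id22 /M /mx22 /blkI_part /blkJ_part /zero22 /=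
  in A00 B00 A01 B01 A10 B10 A11 B11 S00 T00 S01 T01 S10 T10 S11 T11.
have [a00z a01z a10z a11z] := @normalizer_blkI_part d0 d1 m00 m01 m10 m11 p2 q2
   (X (inord 0) (inord 0)) (X (inord 0) (inord 2))
   (X (inord 2) (inord 0)) (X (inord 2) (inord 2))
   hd0 hd1 hm hdisc ltac:(lra) ltac:(lra) ltac:(lra)
   ltac:(lra) ltac:(lra) ltac:(lra) ltac:(lra).
have [u [v [b00e b01e b10e b11e]]] := @commutant22 d0 d1 m00 m01 m10 m11
   (X (inord 1) (inord 0)) (X (inord 1) (inord 2))
   (X (inord 3) (inord 0)) (X (inord 3) (inord 2))
   hd1 hm hdisc ltac:(lra) ltac:(lra) ltac:(lra).
exists u, v; rewrite XE blkJ_comb /blkJ /blkI /lin22 /id22 /M /mx22 /blkI_part /blkJ_part.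
mx44_entrywise; lra.
Qed.

(* Cartan criterion: span(1 (x) J, M (x) J) is a Cartan subalgebra of
   sp(Omega) when M has distinct eigenvalues (it is abelian, hence
   nilpotent, and self-normalizing). *)
Lemma cartan_of_disc : disc22 m00 m01 m10 m11 != 0 ->
  cartan_subalgebra (blkJ (diag22 d0 d1)) (span2 (blkJ id22) (blkJ M)).
Proof.
move=> hdisc.
have habel X Y : span2 (blkJ id22) (blkJ M) X -> span2 (blkJ id22) (blkJ M) Y ->
    lieb X Y = 0.
  by move=> /span2_comb [c1 [c2 ->]] /span2_comb [c1' [c2' ->]]; exact: comb_commute.
have h0 : span2 (blkJ id22) (blkJ M) 0 by exists 0, 0; rewrite !scale0r addr0.
split; first by move=> X /span2_comb [c1 [c2 ->]]; exact: comb_in_sp.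
split.
  move=> X Y [c1 [c2 ->]] [c1' [c2' ->]]; exists (c1 + c1'), (c2 + c2').
  by rewrite !scalerDl addrACA.
split; first by move=> c X [c1 [c2 ->]]; exists (c * c1), (c * c2); rewrite scalerDr !scalerA.
split; first exact: h0.
split; first by move=> X Y hX hY; rewrite (habel X Y hX hY).
split; last by move=> X; exact: comb_self_normalizing.
exists 1%N => -[|x [|? ?]] //= Y _ hx hY.
by apply: habel => //; apply: hx; rewrite mem_seq1.
Qed.

(* Degeneracy: when disc M = 0 (and m01 <> 0) the Omega-skew block matrix
   [0 d1; -d0 0] (x) 1 normalizes the span without belonging to it. *)
Lemma not_cartan_of_disc0 : m01 != 0 -> disc22 m00 m01 m10 m11 = 0 ->
  ~ cartan_subalgebra (blkJ (diag22 d0 d1)) (span2 (blkJ id22) (blkJ M)).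
Proof.
move=> h01 hdisc [_ [_ [_ [_ [_ [_ hnorm]]]]]].
have hdn : m00 - m11 != 0.
  apply/eqP => hz; move: hdisc; rewrite hz expr0n /= add0r => /eqP.
  rewrite mulf_eq0 /= pnatr_eq0 /= mulf_eq0 (negbTE h01) /= => /eqP m10z.
  by move: hm; rewrite m10z mulr0 => /eqP; rewrite mulf_eq0 (negbTE hd0) (negbTE h01).
set X := blkI (mx22 0 d1 (- d0) 0).
have : span2 (blkJ id22) (blkJ M) X.
  apply: hnorm.
    rewrite /in_sp /X /blkI /blkJ /diag22 /mx22; mx44_entrywise; lra.
  move=> Y /span2_comb [c1 [c2 ->]].
  set b := c2 * (4 * (d0 * m01) / (m00 - m11)).
  have hb : b * (m00 - m11) = 4 * c2 * d0 * m01 by rewrite /b; field.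
  clearbody b.
  apply/span2_comb; exists (- b * (m00 + m11) / 2), b.
  rewrite lieb_blkI_blkJ; apply: blkJ_ext => k l hk hl.
  have e1 := congr1 (fun z => z * (m00 - m11)) hb.
  have e2 := congr1 (fun z => z * m01) hb.
  have e3 := congr1 (fun z => z * m10) hb.
  have e4 := congr1 (fun z => c2 * d1 * z) hdisc.
  have e5 := congr1 (fun z => c2 * d0 * z) hdisc.
  have e6 := congr1 (fun z => 4 * c2 * m01 * z) hm.
  have e7 := congr1 (fun z => c2 * z * (m00 - m11)) hm.
  rewrite /= in e1 e2 e3 e4 e5 e6 e7.
  apply: (mulIf hdn).
  move: hk hl; case: k => [|[|]] //; case: l => [|[|]] // _ _;
    rewrite /mul22 /lin22 /id22 /M /mx22 /=; lra.
move=> [c1 [c2 E]].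
have := congr1 (fun A : 'M[R]_4 => A (inord 0) (inord 2)) E.
rewrite /X /blkI /blkJ /mx22 !mxE !inordK //= => h.
by move/eqP: hd1; apply; lra.
Qed.

End CartanCriterion.

Section Eigenvalues.
Variable R : realType.
Local Notation C := (R[i]).
Local Notation rc x := ((x%:C)%C : C).
Local Notation ii := (Complex (0 : R) 1).

Lemma ii_sqr : ii * ii = -1 :> C.
Proof. by rewrite -expr2 sqr_i. Qed.

Lemma ii_neq0 : ii != 0 :> C.
Proof.
apply/eqP => h; move: ii_sqr; rewrite h mul0r => /eqP.
by rewrite eq_sym oppr_eq0 oner_eq0.
Qed.

Lemma iiC (a b : R) : ii * Complex a b = Complex (- b) a.
Proof. by apply/eqP; rewrite eq_complex /= !mul0r !mul1r sub0r add0r !eqxx. Qed.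

Lemma oppCE (a b : R) : - (Complex a b) = Complex (- a) (- b) :> C.
Proof. by []. Qed.

Definition char22 (n00 n01 n10 n11 : R) (mu : C) : C :=
  mu ^+ 2 - (rc (n00 + n11)) * mu + (rc (n00 * n11 - n01 * n10)).

Lemma char22E n00 n01 n10 n11 mu :
  char22 n00 n01 n10 n11 mu = (rc n00 - mu) * (rc n11 - mu) - rc n01 * rc n10.
Proof. rewrite /char22 !rmorphB !rmorphD !rmorphM /=; ring. Qed.

Lemma char22_fact n00 n01 n10 n11 (z1 z2 mu : C) :
  z1 + z2 = rc (n00 + n11) -> z1 * z2 = rc (n00 * n11 - n01 * n10) ->
  char22 n00 n01 n10 n11 mu = (mu - z1) * (mu - z2).
Proof. by move=> h1 h2; rewrite /char22 -h1 -h2; ring. Qed.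

Lemma left_eigvec22 n00 n01 n10 n11 (mu : C) : char22 n00 n01 n10 n11 mu = 0 ->
  exists w0 w1 : C, ((w0 != 0) || (w1 != 0)) /\
    w0 * rc n00 + w1 * rc n10 = mu * w0 /\ w0 * rc n01 + w1 * rc n11 = mu * w1.
Proof.
move=> hc.
have [n10z|n10n] := eqVneq n10 0; last first.
  exists (rc n10), (mu - rc n00); split; first by rewrite fmorph_eq0 n10n.
  split; first by ring.
  apply/eqP; rewrite -subr_eq0; apply/eqP.
  have -> : rc n10 * rc n01 + (mu - rc n00) * rc n11 - mu * (mu - rc n00) =
    - char22 n00 n01 n10 n11 mu by rewrite char22E; ring.
  by rewrite hc oppr0.
subst n10.
have [mun|mun] := eqVneq mu (rc n11).
  exists 0, 1; rewrite oner_neq0 orbT; split => //.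
  by rewrite mun rmorph0; split; ring.
have hm : rc n00 - mu = 0.
  have hn : rc n11 - mu != 0 by rewrite subr_eq0 eq_sym.
  move: hc; rewrite char22E rmorph0 mulr0 subr0 => /eqP; rewrite mulf_eq0.
  by rewrite (negbTE hn) orbF => /eqP.
exists (rc n00 - rc n11), (rc n01); split.
  by rewrite (_ : rc n00 = mu) ?subr_eq0 ?mun //; apply/eqP; rewrite -subr_eq0 hm.
rewrite rmorph0; split; apply/eqP; rewrite -subr_eq0; apply/eqP.
  have -> : (rc n00 - rc n11) * rc n00 + rc n01 * 0 - mu * (rc n00 - rc n11) =
    (rc n00 - rc n11) * (rc n00 - mu) by ring.
  by rewrite hm mulr0.
have -> : (rc n00 - rc n11) * rc n01 + rc n01 * rc n11 - mu * rc n01 =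
  rc n01 * (rc n00 - mu) by ring.
by rewrite hm mulr0.
Qed.

Lemma char22_left_eigvec n00 n01 n10 n11 (u0 u1 mu : C) :
  u0 * rc n00 + u1 * rc n10 = mu * u0 -> u0 * rc n01 + u1 * rc n11 = mu * u1 ->
  (u0 != 0) || (u1 != 0) -> char22 n00 n01 n10 n11 mu = 0.
Proof.
move=> F0 F1 hu.
have h0 : u0 * char22 n00 n01 n10 n11 mu = 0.
  rewrite char22E.
  have -> : u0 * ((rc n00 - mu) * (rc n11 - mu) - rc n01 * rc n10) =
    (rc n11 - mu) * (u0 * rc n00 + u1 * rc n10 - mu * u0)
    - rc n10 * (u0 * rc n01 + u1 * rc n11 - mu * u1) by ring.
  by rewrite F0 F1 !subrr !mulr0 subrr.
have h1 : u1 * char22 n00 n01 n10 n11 mu = 0.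
  rewrite char22E.
  have -> : u1 * ((rc n00 - mu) * (rc n11 - mu) - rc n01 * rc n10) =
    (rc n00 - mu) * (u0 * rc n01 + u1 * rc n11 - mu * u1)
    - rc n01 * (u0 * rc n00 + u1 * rc n10 - mu * u0) by ring.
  by rewrite F0 F1 !subrr !mulr0 subrr.
case/orP: hu => hu.
  by move/eqP: h0; rewrite mulf_eq0 (negbTE hu) => /eqP.
by move/eqP: h1; rewrite mulf_eq0 (negbTE hu) => /eqP.
Qed.

Lemma row_mul_blkJ n00 n01 n10 n11 (v : 'rV[C]_4) :
  let K := map_mx (fun x : R => (x%:C)%C) (blkJ (mx22 n00 n01 n10 n11)) in
  let w k := v ord0 (inord k) in
  [/\ (v *m K) ord0 (inord 0) = w 1%N * rc n00 + w 3%N * rc n10,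
      (v *m K) ord0 (inord 1) = - (w 0%N * rc n00) - w 2%N * rc n10,
      (v *m K) ord0 (inord 2) = w 1%N * rc n01 + w 3%N * rc n11 &
      (v *m K) ord0 (inord 3) = - (w 0%N * rc n01) - w 2%N * rc n11].
Proof.
move=> K w; rewrite /K /w /blkJ /mx22.
by split; rewrite !mxE sum4 !mxE !inordK //= ?rmorph0 ?rmorphN; ring.
Qed.

(* If (v0, v1, v2, v3) is a left eigenvector of N (x) J for l and c^2 = -1,
   then (v0 + c v1, v2 + c v3) is a left eigenvector of N for c l. *)
Lemma Jeig_combine (c l v0 v1 v2 v3 a b x y : C) : c * c = -1 ->
  v1 * a + v3 * b = l * x -> - (v0 * a) - v2 * b = l * y ->
  (v0 + c * v1) * a + (v2 + c * v3) * b = (c * l) * (x + c * y).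
Proof.
move=> hc e0 e1; apply/eqP; rewrite -subr_eq0; apply/eqP.
have -> : (v0 + c * v1) * a + (v2 + c * v3) * b - c * l * (x + c * y) =
  - (- (v0 * a) - v2 * b - l * y) + c * (v1 * a + v3 * b - l * x)
  - (c * c + 1) * l * y by ring.
by rewrite e0 e1 hc; ring.
Qed.

Lemma row4_eq0 (v : 'rV[C]_4) : v ord0 (inord 0) = 0 -> v ord0 (inord 1) = 0 ->
  v ord0 (inord 2) = 0 -> v ord0 (inord 3) = 0 -> v = 0.
Proof.
move=> h0 h1 h2 h3; apply/rowP => j; rewrite mxE -(inord_val j).
by case: j => [[|[|[|[|?]]]] ?] //=.
Qed.

Lemma row4_eq (u u' : 'rV[C]_4) :
  (forall k : nat, (k < 4)%N -> u ord0 (inord k) = u' ord0 (inord k)) -> u = u'.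
Proof.
move=> h; apply/eqP; rewrite -subr_eq0; apply/eqP.
by apply: row4_eq0; rewrite !mxE h // subrr.
Qed.

Lemma ii_pair_eq0 (x y : C) : x + - ii * y = 0 -> x + ii * y = 0 -> x = 0 /\ y = 0.
Proof.
move=> h1 h2.
have hx : x *+ 2 = 0.
  have -> : x *+ 2 = (x + - ii * y) + (x + ii * y) by rewrite mulr2n; ring.
  by rewrite h1 h2 addr0.
have x0 : x = 0 by move/eqP: hx; rewrite mulrn_eq0 /= => /eqP.
split => //; move: h2; rewrite x0 add0r => /eqP; rewrite mulf_eq0 (negbTE ii_neq0) /=.
by move/eqP.
Qed.

Lemma ceig_blkJ_root n00 n01 n10 n11 (l : C) :
  ceig (blkJ (mx22 n00 n01 n10 n11)) l ->
  exists mu, char22 n00 n01 n10 n11 mu = 0 /\ (l = ii * mu \/ l = - (ii * mu)).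
Proof.
move/eigenvalueP => [v hv vn0].
have [e0 e1 e2 e3] := row_mul_blkJ n00 n01 n10 n11 v.
have E k : (v *m map_mx (fun x : R => (x%:C)%C) (blkJ (mx22 n00 n01 n10 n11)))
    ord0 (inord k) = l * v ord0 (inord k) by rewrite hv mxE.
have c0 := etrans (esym e0) (E 0%N); have c1 := etrans (esym e1) (E 1%N).
have c2 := etrans (esym e2) (E 2%N); have c3 := etrans (esym e3) (E 3%N).
have hc1 : (- ii) * (- ii) = -1 :> C by rewrite mulrNN ii_sqr.
have [hf|hf] := boolP ((v ord0 (inord 0) + - ii * v ord0 (inord 1) != 0) ||
                       (v ord0 (inord 2) + - ii * v ord0 (inord 3) != 0)).
  exists (- ii * l); split.
    exact: char22_left_eigvec (Jeig_combine hc1 c0 c1) (Jeig_combine hc1 c2 c3) hf.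
  by left; rewrite mulrA mulrN ii_sqr opprK mul1r.
have [hg|hg] := boolP ((v ord0 (inord 0) + ii * v ord0 (inord 1) != 0) ||
                       (v ord0 (inord 2) + ii * v ord0 (inord 3) != 0)).
  exists (ii * l); split.
    exact: char22_left_eigvec (Jeig_combine ii_sqr c0 c1) (Jeig_combine ii_sqr c2 c3) hg.
  by right; rewrite mulrA ii_sqr mulN1r opprK.
exfalso; move: hf hg; rewrite !negb_or !negbK.
move=> /andP [/eqP f0 /eqP f1] /andP [/eqP g0 /eqP g1].
have [z0 z1] := ii_pair_eq0 f0 g0; have [z2 z3] := ii_pair_eq0 f1 g1.
by move/eqP: vn0; apply; apply: row4_eq0.
Qed.

(* ... and both +-i mu are eigenvalues for every eigenvalue mu of N: the
   vector (w0, d w0, w1, d w1), d = +-i, built from a left eigenvector. *)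
Lemma ceig_blkJ_of_root n00 n01 n10 n11 (mu l : C) :
  char22 n00 n01 n10 n11 mu = 0 -> (l = ii * mu \/ l = - (ii * mu)) ->
  ceig (blkJ (mx22 n00 n01 n10 n11)) l.
Proof.
move=> hchr hl.
have [d [hd hld]] : exists d : C, d * d = -1 /\ l = d * mu.
  case: hl => ->; first by exists ii; rewrite ii_sqr.
  by exists (- ii); rewrite mulrNN ii_sqr mulNr.
have [w0 [w1 [hw [W0 W1]]]] := left_eigvec22 hchr.
apply/eigenvalueP; exists (\row_(j < 4) nth 0 [:: w0; d * w0; w1; d * w1] j); last first.
  apply/eqP => h; move: hw.
  have := congr1 (fun u : 'rV[C]_4 => u ord0 (inord 0)) h.
  have := congr1 (fun u : 'rV[C]_4 => u ord0 (inord 2)) h.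
  by rewrite !mxE !inordK //= => -> ->; rewrite eqxx.
set v := \row_(j < 4) _.
have [e0 e1 e2 e3] := row_mul_blkJ n00 n01 n10 n11 v.
apply: row4_eq => k hk; apply/eqP; rewrite -subr_eq0; apply/eqP.
move: hk e0 e1 e2 e3; case: k => [|[|[|[|k]]]] // _ e0 e1 e2 e3;
  rewrite ?e0 ?e1 ?e2 ?e3 /v !mxE !inordK //= hld.
- have -> : d * w0 * rc n00 + d * w1 * rc n10 - d * mu * w0 =
    d * (w0 * rc n00 + w1 * rc n10 - mu * w0) by ring.
  by rewrite W0 subrr mulr0.
- have -> : - (w0 * rc n00) - w1 * rc n10 - d * mu * (d * w0) =
    - (w0 * rc n00 + w1 * rc n10 - mu * w0) - (d * d + 1) * (mu * w0) by ring.
  by rewrite W0 hd; ring.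
- have -> : d * w0 * rc n01 + d * w1 * rc n11 - d * mu * w1 =
    d * (w0 * rc n01 + w1 * rc n11 - mu * w1) by ring.
  by rewrite W1 subrr mulr0.
- have -> : - (w0 * rc n01) - w1 * rc n11 - d * mu * (d * w1) =
    - (w0 * rc n01 + w1 * rc n11 - mu * w1) - (d * d + 1) * (mu * w1) by ring.
  by rewrite W1 hd; ring.
Qed.

Lemma ceig_blkJ n00 n01 n10 n11 (z1 z2 : C) :
  z1 + z2 = rc (n00 + n11) -> z1 * z2 = rc (n00 * n11 - n01 * n10) ->
  forall l, ceig (blkJ (mx22 n00 n01 n10 n11)) l <->
    l \in [:: ii * z1; - (ii * z1); ii * z2; - (ii * z2)].
Proof.
move=> hs hp l; split.
  move=> /ceig_blkJ_root [mu [hchr hl]]; rewrite !inE.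
  move: hchr => /eqP; rewrite (char22_fact _ hs hp) mulf_eq0 !subr_eq0.
  by case/orP => /eqP E; rewrite E in hl; case: hl => ->; rewrite eqxx ?orbT.
have root1 : char22 n00 n01 n10 n11 z1 = 0 by rewrite (char22_fact _ hs hp) subrr mul0r.
have root2 : char22 n00 n01 n10 n11 z2 = 0 by rewrite (char22_fact _ hs hp) subrr mulr0.
rewrite !inE => /or4P [] /eqP ->.
- by apply: (ceig_blkJ_of_root root1); left.
- by apply: (ceig_blkJ_of_root root1); right.
- by apply: (ceig_blkJ_of_root root2); left.
- by apply: (ceig_blkJ_of_root root2); right.
Qed.

Lemma blkJ_comb_mx22 c1 c2 (m00 m01 m10 m11 : R) :
  c1 *: blkJ id22 + c2 *: blkJ (mx22 m00 m01 m10 m11) =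
  blkJ (mx22 (c1 + c2 * m00) (c2 * m01) (c2 * m10) (c1 + c2 * m11)).
Proof.
rewrite blkJ_comb; apply: blkJ_ext => k l hk hl.
by move: hk hl; case: k => [|[|]] //; case: l => [|[|]] // _ _;
  rewrite /lin22 /id22 /mx22 /=; ring.
Qed.

(* disc M > 0: shifting M by a large multiple of 1 gives two distinct
   positive eigenvalues mu1 <> mu2, hence the spectrum +-i mu1, +-i mu2. *)
Lemma EE_of_pos_disc (m00 m01 m10 m11 : R) : 0 < disc22 m00 m01 m10 m11 ->
  exists c1 c2, is_EE_matrix (c1 *: blkJ id22 + c2 *: blkJ (mx22 m00 m01 m10 m11)).
Proof.
move=> hdisc.
set s := Num.sqrt (disc22 m00 m01 m10 m11).
have s0 : 0 < s by rewrite sqrtr_gt0.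
have s2 : s ^+ 2 = disc22 m00 m01 m10 m11 by rewrite sqr_sqrtr // ltW.
set c := `|(m00 + m11 + s) / 2| + `|(m00 + m11 - s) / 2| + 1.
set mu1 := c + (m00 + m11 + s) / 2.
set mu2 := c + (m00 + m11 - s) / 2.
have h1 : 0 < mu1.
  have := ler_norm (- ((m00 + m11 + s) / 2)); have := normr_ge0 ((m00 + m11 - s) / 2).
  rewrite normrN /mu1 /c; lra.
have h2 : 0 < mu2.
  have := ler_norm (- ((m00 + m11 - s) / 2)); have := normr_ge0 ((m00 + m11 + s) / 2).
  rewrite normrN /mu2 /c; lra.
have hs : rc mu1 + rc mu2 = rc ((c + m00) + (c + m11)).
  by rewrite -rmorphD; congr (rc _); rewrite /mu1 /mu2; lra.
have hp : rc mu1 * rc mu2 = rc ((c + m00) * (c + m11) - m01 * m10).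
  rewrite -rmorphM; congr (rc _); rewrite /mu1 /mu2.
  have -> : (c + (m00 + m11 + s) / 2) * (c + (m00 + m11 - s) / 2) =
    (c + (m00 + m11) / 2) ^+ 2 - s ^+ 2 / 4 by field.
  by rewrite s2; field.
exists c, 1; rewrite blkJ_comb_mx22 !mul1r.
exists mu1, mu2; split; first by rewrite gt_eqF.
split; first by rewrite gt_eqF.
split; first by apply/eqP; rewrite /mu1 /mu2; lra.
split.
  rewrite /= !inE !eq_complex /= !eqxx /= !negb_or.
  have n1 : mu1 != - mu1 by apply/eqP; lra.
  have n2 : mu2 != - mu2 by apply/eqP; lra.
  have n3 : mu1 != mu2 by apply/eqP; rewrite /mu1 /mu2; lra.
  have n4 : mu1 != - mu2 by apply/eqP; lra.
  have n5 : - mu1 != mu2 by apply/eqP; lra.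
  have n6 : - mu1 != - mu2 by apply/eqP; rewrite /mu1 /mu2; lra.
  by rewrite n1 n2 n3 n4 n5 n6.
move=> l; rewrite (ceig_blkJ hs hp) !iiC !oppCE !oppr0.
by split; rewrite !inE => /or4P [] /eqP ->; rewrite eqxx ?orbT.
Qed.

(* disc M < 0: shifting M gives the eigenvalues 1 +- w i, hence the
   spectrum +-w +-i of focus-focus type. *)
Lemma FF_of_neg_disc (m00 m01 m10 m11 : R) : disc22 m00 m01 m10 m11 < 0 ->
  exists c1 c2, is_FF_matrix (c1 *: blkJ id22 + c2 *: blkJ (mx22 m00 m01 m10 m11)).
Proof.
move=> hdisc.
set w := Num.sqrt (- disc22 m00 m01 m10 m11) / 2.
have w0 : 0 < w by rewrite /w divr_gt0 // sqrtr_gt0 oppr_gt0.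
have w2 : w ^+ 2 * 4 = - disc22 m00 m01 m10 m11.
  by rewrite /w expr_div_n sqr_sqrtr; [field | rewrite oppr_ge0 ltW].
set c := 1 - (m00 + m11) / 2.
have hs : Complex 1 w + Complex 1 (- w) = rc ((c + m00) + (c + m11)).
  by apply/eqP; rewrite eq_complex /= /c; apply/andP; split; apply/eqP; field.
have hp : Complex 1 w * Complex 1 (- w) = rc ((c + m00) * (c + m11) - m01 * m10).
  apply/eqP; rewrite eq_complex /=; apply/andP; split; apply/eqP; last by ring.
  have -> : 1 * 1 - w * - w = 1 + (w ^+ 2 * 4) / 4 by field.
  by rewrite w2 /c; field.
exists c, 1; rewrite blkJ_comb_mx22 !mul1r.
exists w, 1; split; first by rewrite gt_eqF.
split; first by rewrite oner_eq0.
move=> l; rewrite (ceig_blkJ hs hp) !iiC !oppCE !opprK.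
by split; rewrite !inE => /or4P [] /eqP ->; rewrite eqxx ?orbT.
Qed.

End Eigenvalues.

Section DirectionalDerivatives.
Variable R : realType.
Variable V : normedModType R.
Implicit Types (f g : V -> R) (a v : V).

Lemma derive_lineE f a v : 'D_v f a = 'D_1 (fun h : R => f (h *: v + a)) 0.
Proof.
rewrite /derive; set g1 := fun h => h^-1 *: _; set g2 := fun h => h^-1 *: _.
suff -> : g1 = g2 by [].
rewrite funeqE /g1 /g2 => h /=; rewrite addr0 scale0r add0r.
congr (_ *: (f (_ *: _ + _) - _)); exact: (esym (mulr1 h)).
Qed.

Lemma is_derive_lineP f a v df :
  is_derive a v f df <-> is_derive (0 : R) 1 (fun h : R => f (h *: v + a)) df.
Proof.
split=> -[d e]; split.
- by move/derivable1P: d.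
- by rewrite -derive_lineE.
- by apply/derivable1P.
- by rewrite derive_lineE.
Qed.

Lemma is_derive_comp1 f (G : R -> R) a v df dG :
  is_derive a v f df -> is_derive (f a) 1 G dG ->
  is_derive a v (fun x => G (f x)) (dG * df).
Proof.
move=> /is_derive_lineP hf hG; apply/is_derive_lineP.
have -> : (fun h : R => G (f (h *: v + a))) = G \o (fun h : R => f (h *: v + a)) by [].
by apply: is_derive1_comp => //; rewrite scale0r add0r.
Qed.

(* The differentiation rules, stated for pointwise-written functions so
   that they compose by unification on explicit formulas. *)
Lemma isdD f g a v df dg : is_derive a v f df -> is_derive a v g dg ->
  is_derive a v (fun x => f x + g x) (df + dg).
Proof. by move=> hf hg; exact: (is_deriveD hf hg). Qed.

Lemma isdB f g a v df dg : is_derive a v f df -> is_derive a v g dg ->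
  is_derive a v (fun x => f x - g x) (df - dg).
Proof. by move=> hf hg; exact: (is_deriveB hf hg). Qed.

Lemma isdN f a v df : is_derive a v f df -> is_derive a v (fun x => - f x) (- df).
Proof. by move=> hf; exact: (is_deriveN hf). Qed.

Lemma isdM f g a v df dg : is_derive a v f df -> is_derive a v g dg ->
  is_derive a v (fun x => f x * g x) (f a * dg + g a * df).
Proof. by move=> hf hg; exact: (is_deriveM hf hg). Qed.

Lemma isdZ (k : R) f a v df :
  is_derive a v f df -> is_derive a v (fun x => k * f x) (k * df).
Proof. by move=> hf; exact: (is_deriveZ k hf). Qed.

Lemma isdC (k : R) a v : is_derive a v (fun _ => k) 0.
Proof. exact: is_derive_cst. Qed.

Lemma isdV f a v df : f a != 0 -> is_derive a v f df ->
  is_derive a v (fun x => (f x)^-1) (- (f a)^-2 * df).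
Proof. by move=> fa [d e]; split; [exact: derivableV | rewrite deriveV // e]. Qed.

Lemma isd_sqrt f a v df : 0 < f a -> is_derive a v f df ->
  is_derive a v (fun x => Num.sqrt (f x)) ((2 * Num.sqrt (f a))^-1 * df).
Proof. by move=> fa hf; apply: is_derive_comp1 => //; exact: is_derive1_sqrt. Qed.

Lemma isd_ln f a v df : 0 < f a -> is_derive a v f df ->
  is_derive a v (fun x => ln (f x)) ((f a)^-1 * df).
Proof. by move=> fa hf; apply: is_derive_comp1 => //; exact: is_derive1_ln. Qed.

Lemma isd_eq f a v df df' : is_derive a v f df -> df = df' -> is_derive a v f df'.
Proof. by move=> h <-. Qed.

End DirectionalDerivatives.

Section Coordinates.
Variable R : realType.

Lemma isd_coord n (a v : 'rV[R]_n) k :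
  is_derive a v (fun q : 'rV[R]_n => q ord0 k) (v ord0 k).
Proof.
apply/is_derive_lineP.
have -> : (fun h : R => (h *: v + a) ord0 k) = (fun h => h * v ord0 k + a ord0 k).
  by rewrite funeqE => h; rewrite !mxE.
have H := isdD (isdM (@is_derive_id _ R 0 1) (isdC (v ord0 k) (0 : R) 1))
               (isdC (a ord0 k) (0 : R) 1).
by apply: (isd_eq H); rewrite /=; ring.
Qed.

Lemma near_coords n (p : 'rV[R]_n) (e : R) : 0 < e ->
  nbhs (p : ('rV[R]_n : normedModType R))
    (fun q : 'rV[R]_n => forall k, `|q ord0 k - p ord0 k| < e).
Proof.
move=> e0; apply/nbhs_ballP; exists e => //= q [_ hq] k.
by have := hq ord0 k; rewrite -ball_normE /= distrC.
Qed.

End Coordinates.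

Section ChartDerivatives.
Variable R : realType.
Implicit Types (a v w q : 'rV[R]_4).

(* On the pair of chart coordinates (x, y) = (q_k, q_(k+1)), k = 0 or 2:
   z^2 = 1 - x^2 - y^2 and |z| = sqrt (z^2), with their first derivatives
   and the second derivative of |z| at the pole. *)
Definition zsq (k : nat) q := 1 - co4 q k ^+ 2 - co4 q k.+1 ^+ 2.
Definition dzsq (k : nat) a v := - (2 * (co4 a k * co4 v k + co4 a k.+1 * co4 v k.+1)).
Definition zabs (k : nat) q := Num.sqrt (zsq k q).
Definition dzabs (k : nat) a v := (2 * zabs k a)^-1 * dzsq k a v.
Definition d2zabs (k : nat) v w := - (co4 v k * co4 w k + co4 v k.+1 * co4 w k.+1).

Lemma co4_0 k : co4 (0 : 'rV[R]_4) k = 0.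
Proof. by rewrite /co4 mxE. Qed.

Lemma zabs_0 k : zabs k 0 = 1.
Proof. by rewrite /zabs /zsq !co4_0 expr0n /= !subr0 sqrtr1. Qed.

Lemma dzsq_0 k v : dzsq k 0 v = 0.
Proof. by rewrite /dzsq !co4_0 !mul0r addr0 mulr0 oppr0. Qed.

Lemma isd_co4 a v k : is_derive a v (fun q : 'rV[R]_4 => co4 q k) (co4 v k).
Proof. exact: isd_coord. Qed.

Lemma isd_zsq k a v : is_derive a v (zsq k) (dzsq k a v).
Proof.
have H := isdB (isdB (isdC 1 a v) (isdM (isd_co4 a v k) (isd_co4 a v k)))
               (isdM (isd_co4 a v k.+1) (isd_co4 a v k.+1)).
by apply: (isd_eq H); rewrite /dzsq; ring.
Qed.

Lemma isd_zabs k a v : 0 < zsq k a -> is_derive a v (zabs k) (dzabs k a v).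
Proof. by move=> h; exact: (isd_sqrt h (isd_zsq k a v)). Qed.

Lemma isd_zabs_0 k w : is_derive 0 w (zabs k) 0.
Proof.
apply: (isd_eq (isd_zabs (k := k) (a := 0) w _)); last by rewrite /dzabs dzsq_0 mulr0.
by rewrite /zsq !co4_0 expr0n /= !subr0 ltr01.
Qed.

Lemma isd_dzsq k v w : is_derive 0 w (fun a => dzsq k a v) (dzsq k w v).
Proof.
have H := isdN (isdZ 2 (isdD (isdM (isd_co4 0 w k) (isdC (co4 v k) 0 w))
                              (isdM (isd_co4 0 w k.+1) (isdC (co4 v k.+1) 0 w)))).
by apply: (isd_eq H); rewrite /dzsq !co4_0; ring.
Qed.

Lemma isd_dzabs k v w : is_derive 0 w (fun a => dzabs k a v) (d2zabs k v w).
Proof.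
have h2 : 2 * zabs k 0 != 0 by rewrite zabs_0 mulr1 pnatr_eq0.
have H := isdM (isdV (f := fun a => 2 * zabs k a) h2 (isdZ 2 (isd_zabs_0 k w)))
               (isd_dzsq k v w).
apply: (isd_eq H); rewrite zabs_0 dzsq_0 /dzsq /d2zabs mulr1.
by field; rewrite ?pnatr_eq0.
Qed.

End ChartDerivatives.

Section ChartFunctions.
Variable R : realType.
Implicit Types (a v w q : 'rV[R]_4).
Variables (R1 R2 t s1 s2 : R).

(* L and H in the chart at a pole (s1, s2 the signs of z1, z2), their
   first derivatives P and their Hessian bilinear forms B at the pole. *)
Definition gL q := R1 * (s1 * zabs 0 q) + R2 * ln (zabs 2 q).
Definition PL v a := R1 * (s1 * dzabs 0 a v) + R2 * ((zabs 2 a)^-1 * dzabs 2 a v).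
Definition BL v w := R1 * (s1 * d2zabs 0 v w) + R2 * d2zabs 2 v w.

Definition gH q := (1 - t) * (s1 * zabs 0 q) +
  t * (co4 q 0 * co4 q 2 + co4 q 1 * co4 q 3 + (s1 * zabs 0 q) * (s2 * zabs 2 q)).
Definition PH v a := (1 - t) * (s1 * dzabs 0 a v) +
  t * ((co4 a 0 * co4 v 2 + co4 a 2 * co4 v 0) + (co4 a 1 * co4 v 3 + co4 a 3 * co4 v 1) +
       ((s1 * zabs 0 a) * (s2 * dzabs 2 a v) + (s2 * zabs 2 a) * (s1 * dzabs 0 a v))).
Definition BH v w := (1 - t) * (s1 * d2zabs 0 v w) +
  t * ((co4 w 0 * co4 v 2 + co4 w 2 * co4 v 0) + (co4 w 1 * co4 v 3 + co4 w 3 * co4 v 1) +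
       s1 * s2 * (d2zabs 2 v w + d2zabs 0 v w)).

Lemma isd_gL a v : 0 < zsq 0 a -> 0 < zsq 2 a -> is_derive a v gL (PL v a).
Proof.
move=> h0 h2.
have S2 : 0 < zabs 2 a by rewrite /zabs sqrtr_gt0.
exact: (isdD (isdZ R1 (isdZ s1 (isd_zabs v h0))) (isdZ R2 (isd_ln S2 (isd_zabs v h2)))).
Qed.

Lemma isd_PL v w : is_derive 0 w (PL v) (BL v w).
Proof.
have hS : zabs 2 (0 : 'rV[R]_4) != 0 by rewrite zabs_0 oner_eq0.
have H := isdD (isdZ R1 (isdZ s1 (isd_dzabs 0 v w)))
   (isdZ R2 (isdM (isdV hS (isd_zabs_0 2 w)) (isd_dzabs 2 v w))).
apply: (isd_eq H).
by rewrite /BL /dzabs zabs_0 dzsq_0 invr1 !mulr0 mul1r addr0.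
Qed.

Lemma isd_gH a v : 0 < zsq 0 a -> 0 < zsq 2 a -> is_derive a v gH (PH v a).
Proof.
move=> h0 h2.
have H := isdD (isdZ (1 - t) (isdZ s1 (isd_zabs v h0)))
  (isdZ t (isdD (isdD (isdM (isd_co4 a v 0) (isd_co4 a v 2))
                      (isdM (isd_co4 a v 1) (isd_co4 a v 3)))
     (isdM (isdZ s1 (isd_zabs v h0)) (isdZ s2 (isd_zabs v h2))))).
by apply: (isd_eq H); rewrite /PH; ring.
Qed.

Lemma isd_PH v w : is_derive 0 w (PH v) (BH v w).
Proof.
have cst k := isdC (co4 v k) (0 : 'rV[R]_4) w.
have H := isdD (isdZ (1 - t) (isdZ s1 (isd_dzabs 0 v w)))
  (isdZ t (isdD (isdD
     (isdD (isdM (isd_co4 0 w 0) (cst 2%N)) (isdM (isd_co4 0 w 2) (cst 0%N)))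
     (isdD (isdM (isd_co4 0 w 1) (cst 3%N)) (isdM (isd_co4 0 w 3) (cst 1%N))))
   (isdD (isdM (isdZ s1 (isd_zabs_0 0 w)) (isdZ s2 (isd_dzabs 2 v w)))
         (isdM (isdZ s2 (isd_zabs_0 2 w)) (isdZ s1 (isd_dzabs 0 v w)))))).
apply: (isd_eq H).
by rewrite /BH /dzabs !zabs_0 !dzsq_0 !co4_0; ring.
Qed.

End ChartFunctions.

Section ChartHessians.
Variable R : realType.

Lemma hess_gen (g : 'rV[R]_4 -> R) (P B : 'rV[R]_4 -> 'rV[R]_4 -> R) :
  (forall v r, 0 < zsq 0 r -> 0 < zsq 2 r -> is_derive r v g (P v r)) ->
  (forall v w, is_derive 0 w (P v) (B v w)) ->
  hessian g (chart_pole R) = \matrix_(i < 4, j < 4) B (ebasis R i) (ebasis R j).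
Proof.
move=> h1 h2; apply/matrixP => i j; rewrite !mxE /chart_pole.
have E : \forall x \near (0 : ('rV[R]_4 : normedModType R)),
    'D_(ebasis R i) g x = P (ebasis R i) x.
  have half : (0 : R) < 1/2 by rewrite divr_gt0.
  apply: filterS (near_coords 0 half) => r hr.
  have small k : - (1/2) < co4 r k < 1/2.
    by rewrite -ltr_norml; have := hr (inord k); rewrite mxE subr0.
  have /andP[a0 b0] := small 0%N; have /andP[a1 b1] := small 1%N.
  have /andP[a2 b2] := small 2%N; have /andP[a3 b3] := small 3%N.
  have p0 : 0 < zsq 0 r by rewrite /zsq; nra.
  have p2 : 0 < zsq 2 r by rewrite /zsq; nra.
  exact: (@derive_val _ _ _ _ _ _ _ (h1 (ebasis R i) r p0 p2)).
rewrite (near_eq_derive _ E).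
exact: (@derive_val _ _ _ _ _ _ _ (h2 (ebasis R i) (ebasis R j))).
Qed.

Lemma co6_mk6 (a b c d e f : R) (k : nat) : (k < 6)%N ->
  co6 (mk6 a b c d e f) k = nth 0 [:: a; b; c; d; e; f] k.
Proof. by move=> hk; rewrite /co6 /mk6 !mxE !inordK. Qed.

Lemma sgnb2 e : sgnb R e * sgnb R e = 1.
Proof. by case: e; rewrite /sgnb ?mulr1 ?mulrNN ?mulr1. Qed.

Lemma sgnb_norm e : `|sgnb R e| = 1.
Proof. by case: e; rewrite /sgnb ?normrN normr1. Qed.

Lemma sgnb_neq0 e : sgnb R e != 0.
Proof. by case: e; rewrite /sgnb ?oppr_eq0 oner_eq0. Qed.

Lemma co4_ebasis (k a : nat) : (k < 4)%N -> (a < 4)%N ->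
  co4 (ebasis R (inord a)) k = (k == a)%:R.
Proof.
move=> hk ha; rewrite /co4 /ebasis mxE eqxx /=.
by rewrite -(inj_eq val_inj) /= !inordK.
Qed.

Lemma hessL (R1 R2 : R) e1 e2 :
  hessian (fun q => bval (Lsys R1 R2) (chart_inv e1 e2 q)) (chart_pole R) =
  blkI (mx22 (- (sgnb R e1 * R1)) 0 0 (- R2)).
Proof.
have -> : (fun q => bval (Lsys R1 R2) (chart_inv e1 e2 q)) = gL R1 R2 (sgnb R e1).
  rewrite funeqE => q; rewrite /bval /Lsys /chart_inv /= !co6_mk6 //=.
  by rewrite /gL normrM sgnb_norm mul1r ger0_norm ?sqrtr_ge0.
rewrite (hess_gen (fun v r h0 h2 => @isd_gL R R1 R2 (sgnb R e1) r v h0 h2)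
                  (fun v w => @isd_PL R R1 R2 (sgnb R e1) v w)).
by rewrite /blkI /mx22 /BL /d2zabs; mx44_entrywise; rewrite !co4_ebasis //=; ring.
Qed.

Lemma hessH (t : R) e1 e2 :
  hessian (fun q => bval (Hsys t) (chart_inv e1 e2 q)) (chart_pole R) =
  blkI (mx22 (- ((1 - t) * sgnb R e1) - t * (sgnb R e1 * sgnb R e2)) t t
         (- (t * (sgnb R e1 * sgnb R e2)))).
Proof.
have -> : (fun q => bval (Hsys t) (chart_inv e1 e2 q)) = gH t (sgnb R e1) (sgnb R e2).
  by rewrite funeqE => q; rewrite /bval /Hsys /chart_inv /= !co6_mk6 //= mul0r addr0.
rewrite (hess_gen (fun v r h0 h2 => @isd_gH R t (sgnb R e1) (sgnb R e2) r v h0 h2)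
                  (fun v w => @isd_PH R t (sgnb R e1) (sgnb R e2) v w)).
by rewrite /blkI /mx22 /BH /d2zabs; mx44_entrywise; rewrite !co4_ebasis //=; ring.
Qed.

End ChartHessians.

Section SymplecticMatrix.
Variable R : realType.

Lemma OmegaE (R1 R2 : R) e1 :
  Omega R1 R2 e1 (chart_pole R) = blkJ (diag22 (sgnb R e1 * R1) R2).
Proof.
rewrite /Omega /chart_pole !co4_0 expr0n /= !subr0 sqrtr1 !divr1 /blkJ /diag22 /mx22.
by mx44_entrywise; ring.
Qed.

Lemma inord_eq4 (a b : nat) : (a < 4)%N -> (b < 4)%N ->
  (inord a == inord b :> 'I_4) = (a == b).
Proof. by move=> ha hb; rewrite -(inj_eq val_inj) /= !inordK. Qed.

Lemma invOmega (d0 d1 : R) : d0 != 0 -> d1 != 0 ->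
  invmx (blkJ (diag22 d0 d1)) = blkJ (diag22 (- d0^-1) (- d1^-1)).
Proof.
move=> h0 h1.
have Omega_inv : blkJ (diag22 d0 d1) *m blkJ (diag22 (- d0^-1) (- d1^-1)) = 1%:M.
  rewrite /blkJ /diag22 /mx22.
  by mx44_entrywise; rewrite ?inord_eq4 //= ?mulr1n ?mulr0n; field.
have [u _] := mulmx1_unit Omega_inv.
by rewrite -[RHS]mul1mx -(mulVmx u) -mulmxA Omega_inv mulmx1.
Qed.

End SymplecticMatrix.

Section Linearisation.
Variable R : realType.
Variables (R1 R2 t : R) (e1 e2 : bool).
Hypotheses (hR1 : 0 < R1) (hR2 : 0 < R2).
Local Notation s1 := (sgnb R e1).
Local Notation s2 := (sgnb R e2).

(* The diagonal entries of the Hessian of H at the pole p_{e1,e2} ... *)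
Definition alH := - ((1 - t) * s1) - t * (s1 * s2).
Definition beH := - (t * (s1 * s2)).
(* ... and the 2x2 matrix M with A_H = M (x) J, with its discriminant. *)
Definition mm00 := - (alH / (s1 * R1)).
Definition mm01 := - (t / (s1 * R1)).
Definition mm10 := - (t / R2).
Definition mm11 := - (beH / R2).
Definition discM := (mm00 - mm11) ^+ 2 + 4 * (mm01 * mm10).

Let d0_neq0 : s1 * R1 != 0.
Proof. by rewrite mulf_neq0 ?sgnb_neq0 // gt_eqF. Qed.
Let d1_neq0 : R2 != 0.
Proof. by rewrite gt_eqF. Qed.

Lemma AmatL : Amat R1 R2 e1 e2 (Lsys R1 R2) = blkJ id22.
Proof.
rewrite /Amat OmegaE (invOmega d0_neq0 d1_neq0) hessL blkJ_mul_blkI.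
apply: blkJ_ext => k l hk hl; have h2 := sgnb2 R e1.
move: hk hl; case: k => [|[|]] //; case: l => [|[|]] // _ _;
  rewrite /mul22 /diag22 /id22 /mx22 /=; field;
  rewrite ?sgnb_neq0 ?(gt_eqF hR1) ?(gt_eqF hR2) ?mulf_neq0 //.
Qed.

Lemma AmatH : Amat R1 R2 e1 e2 (Hsys t) = blkJ (mx22 mm00 mm01 mm10 mm11).
Proof.
rewrite /Amat OmegaE (invOmega d0_neq0 d1_neq0) hessH blkJ_mul_blkI.
apply: blkJ_ext => k l hk hl.
move: hk hl; case: k => [|[|]] //; case: l => [|[|]] // _ _;
  rewrite /mul22 /diag22 /mx22 /mm00 /mm01 /mm10 /mm11 /alH /beH /=; field;
  rewrite ?sgnb_neq0 ?(gt_eqF hR1) ?(gt_eqF hR2) ?mulf_neq0 //.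
Qed.

Let M_sym : (s1 * R1) * mm01 = R2 * mm10.
Proof.
rewrite /mm01 /mm10; field.
by rewrite ?sgnb_neq0 ?(gt_eqF hR1) ?(gt_eqF hR2) ?mulf_neq0.
Qed.

Lemma nondeg_of_disc : discM != 0 -> nondeg_fixed_point R1 R2 t e1 e2.
Proof.
move=> hd; rewrite /nondeg_fixed_point OmegaE AmatL AmatH.
exact: (cartan_of_disc d0_neq0 d1_neq0 M_sym hd).
Qed.

Lemma EE_of_disc : 0 < discM -> elliptic_elliptic R1 R2 t e1 e2.
Proof. by move=> hd; rewrite /elliptic_elliptic AmatL AmatH; exact: EE_of_pos_disc. Qed.

Lemma FF_of_disc : discM < 0 -> focus_focus R1 R2 t e1 e2.
Proof. by move=> hd; rewrite /focus_focus AmatL AmatH; exact: FF_of_neg_disc. Qed.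

Lemma degen_of_disc : discM = 0 -> t != 0 -> ~ nondeg_fixed_point R1 R2 t e1 e2.
Proof.
move=> hd ht; rewrite /nondeg_fixed_point OmegaE AmatL AmatH.
apply: (not_cartan_of_disc0 d0_neq0 d1_neq0 M_sym _ hd).
by rewrite /mm01 oppr_eq0 mulf_neq0 // invr_neq0.
Qed.

(* R1^2 R2^2 disc M, a polynomial in t. *)
Definition discN := (R2 * ((1 - t) + t * s2) - t * (s1 * s2) * R1) ^+ 2
  + 4 * (s1 * t ^+ 2 * R1 * R2).

Lemma discM_scaled : discM = discN / (R1 ^+ 2 * R2 ^+ 2).
Proof.
rewrite /discM /discN /mm00 /mm01 /mm10 /mm11 /alH /beH.
by case: e1; case: e2; rewrite /sgnb /=; field; rewrite ?(gt_eqF hR1) ?(gt_eqF hR2).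
Qed.

Lemma discM_pos : 0 < discN -> 0 < discM.
Proof. by move=> h; rewrite discM_scaled divr_gt0 // mulr_gt0 // exprn_gt0. Qed.

End Linearisation.

Section DiscriminantSign.
Variable R : realType.

(* At p_{+,+} and p_{+,-} the numerator is a square plus 4 t^2 R1 R2. *)
Lemma discN_pos_plus (R1 R2 t : R) e2 : 0 < R1 -> 0 < R2 -> 0 <= t ->
  0 < discN R1 R2 t true e2.
Proof.
move=> hR1 hR2 ht0; rewrite /discN /sgnb /= !mul1r.
have [->|tn0] := eqVneq t 0; first by have := exprn_gt0 2 hR2; lra.
have tp : 0 < t by rewrite lt_def tn0 ht0.
by apply: ltr_wpDl; [exact: sqr_ge0 | rewrite !mulr_gt0 // exprn_gt0].
Qed.

(* At p_{-,+} it is a sum of nonnegative terms, one of them positive. *)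
Lemma discN_pos_minus_plus (R1 R2 t : R) : 0 < R1 -> R1 < R2 -> 0 <= t -> t <= 1 ->
  0 < discN R1 R2 t false true.
Proof.
move=> hR1 hR12 ht0 ht1; rewrite /discN /sgnb /=.
have -> : (R2 * (1 - t + t * 1) - t * (-1 * 1) * R1) ^+ 2 + 4 * (-1 * t ^+ 2 * R1 * R2) =
  (1 - t) * R2 ^+ 2 + t * (R2 - R1) ^+ 2 + (4 * R1 * R2 - R1 ^+ 2) * (t * (1 - t)) by ring.
have h1 : 0 <= (4 * R1 * R2 - R1 ^+ 2) * (t * (1 - t)).
  apply: mulr_ge0; last by apply: mulr_ge0; [exact: ht0 | rewrite subr_ge0].
  have : 0 < R1 * (4 * R2 - R1) by apply: mulr_gt0 => //; lra.
  by rewrite expr2; lra.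
have h2 : 0 < (R2 - R1) ^+ 2 by rewrite exprn_gt0 // subr_gt0.
have h3 : (R2 - R1) ^+ 2 <= R2 ^+ 2.
  have : 0 < R1 * (2 * R2 - R1) by apply: mulr_gt0 => //; lra.
  by rewrite !expr2; lra.
have h4 : 0 <= (1 - t) * (R2 ^+ 2 - (R2 - R1) ^+ 2) by apply: mulr_ge0; rewrite subr_ge0.
lra.
Qed.

(* At p_{-,-}: writing t^- = R2 / P and t^+ = R2 / Q, the numerator is
   P Q (t^- - t)(t^+ - t), so t^-, t^+ are the two roots where disc M
   changes sign. *)
Lemma discM_minus_minus (R1 R2 : R) : 0 < R1 -> R1 < R2 ->
  [/\ 0 < t_minus R1 R2, t_minus R1 R2 < t_plus R1 R2 &
      forall t, exists k : R, 0 < k /\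
        discM R1 R2 t false false = k * ((t_minus R1 R2 - t) * (t_plus R1 R2 - t))].
Proof.
move=> hR1 hR12; have hR2 : 0 < R2 by apply: lt_trans hR1 hR12.
set s := Num.sqrt (R1 * R2).
have s2 : s ^+ 2 = R1 * R2 by rewrite sqr_sqrtr // mulr_ge0 // ltW.
have sp : 0 < s by rewrite sqrtr_gt0 mulr_gt0.
set P := 2 * R2 + R1 + 2 * s; set Q := 2 * R2 + R1 - 2 * s.
have P0 : 0 < P by rewrite /P; lra.
have Q0 : 0 < Q.
  rewrite /Q; apply/negPn/negP; rewrite -leNgt => hq.
  have : (2 * R2 + R1) ^+ 2 <= (2 * s) ^+ 2 by rewrite ler_sqr ?nnegrE; lra.
  by rewrite exprMn s2 !expr2; nra.
have -> : t_minus R1 R2 = R2 / P by [].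
have -> : t_plus R1 R2 = R2 / Q by [].
split.
- by rewrite divr_gt0.
- rewrite -subr_gt0.
  have -> : R2 / Q - R2 / P = R2 * (P - Q) / (P * Q) by field; rewrite ?gt_eqF.
  by rewrite divr_gt0 ?mulr_gt0 // subr_gt0 /P /Q; lra.
move=> t; exists (P * Q / (R1 ^+ 2 * R2 ^+ 2)); split.
  by rewrite divr_gt0 ?mulr_gt0 // exprn_gt0.
have hN : discN R1 R2 t false false = P * Q * ((R2 / P - t) * (R2 / Q - t)).
  rewrite mulrA.
  have -> : P * Q * (R2 / P - t) * (R2 / Q - t) = (R2 - t * P) * (R2 - t * Q).
    by field; rewrite ?gt_eqF.
  have -> : (R2 - t * P) * (R2 - t * Q) =
    R2 ^+ 2 - t * R2 * (2 * (2 * R2 + R1)) + t ^+ 2 * ((2 * R2 + R1) ^+ 2 - 4 * s ^+ 2).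
    by rewrite /P /Q; ring.
  by rewrite s2 /discN /sgnb /=; ring.
by rewrite discM_scaled // hN mulrAC.
Qed.

End DiscriminantSign.

Section FixedPoints.
Variable R : realType.
Implicit Types (p q w : 'rV[R]_6).

Lemma isd_co6 p w k : is_derive p w (fun q : 'rV[R]_6 => co6 q k) (co6 w k).
Proof. exact: isd_coord. Qed.

Lemma isd_bvalL (R1 R2 : R) p w : co6 p 5 != 0 ->
  is_derive p w (bval (Lsys R1 R2)) (R1 * co6 w 2 + R2 * (co6 w 5 / co6 p 5)).
Proof.
move=> hp; set z := co6 p 5.
pose sg : R := if 0 < z then 1 else -1.
have sgz : 0 < sg * z.
  rewrite /sg; case: ifP => h; first by rewrite mul1r.
  by rewrite mulN1r oppr_gt0 lt_neqAle hp leNgt h.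
have sg_neq0 : sg != 0 by rewrite /sg; case: ifP; rewrite ?oppr_eq0 oner_eq0.
have H := isdD (isdZ R1 (isd_co6 p w 2))
  (isdZ R2 (isd_ln (f := fun q => sg * co6 q 5) sgz (isdZ sg (isd_co6 p w 5)))).
(* near p, |z2| = sg z2 *)
apply: (near_eq_is_derive (f := fun q => R1 * co6 q 2 + R2 * ln (sg * co6 q 5))).
  have hz : 0 < `|z| / 2 by rewrite divr_gt0 // normr_gt0.
  apply: filterS (near_coords p hz) => q hq.
  rewrite /bval /Lsys /=; congr (_ + R2 * ln _).
  have := hq (inord 5); rewrite -/(co6 q 5) -/(co6 p 5) -/z ltr_norml => /andP [hd1 hd2].
  rewrite /sg; case: ifP => h.
    by rewrite gtr0_norm // in hd1 hd2; rewrite mul1r gtr0_norm //; lra.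
  have hn : z < 0 by rewrite lt_neqAle hp leNgt h.
  by rewrite ltr0_norm // in hd1 hd2; rewrite mulN1r ltr0_norm //; lra.
by apply: (isd_eq H); rewrite /= -/z; field; rewrite sg_neq0 hp.
Qed.

Lemma isd_bvalH (t : R) p w : is_derive p w (bval (Hsys t))
  ((1 - t) * co6 w 2 + t * (co6 w 0 * co6 p 3 + co6 p 0 * co6 w 3
     + (co6 w 1 * co6 p 4 + co6 p 1 * co6 w 4) + (co6 w 2 * co6 p 5 + co6 p 2 * co6 w 5))).
Proof.
have -> : bval (Hsys t) = fun q => (1 - t) * co6 q 2 +
    t * (co6 q 0 * co6 q 3 + co6 q 1 * co6 q 4 + co6 q 2 * co6 q 5).
  by rewrite funeqE => q; rewrite /bval /= mul0r addr0.
have H := isdD (isdZ (1 - t) (isd_co6 p w 2))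
  (isdZ t (isdD (isdD (isdM (isd_co6 p w 0) (isd_co6 p w 3))
                      (isdM (isd_co6 p w 1) (isd_co6 p w 4)))
                (isdM (isd_co6 p w 2) (isd_co6 p w 5)))).
by apply: (isd_eq H); ring.
Qed.

Lemma sqr_sum_eq0 (a b : R) : a ^+ 2 + b ^+ 2 = 0 -> a = 0 /\ b = 0.
Proof.
move=> h; have ha := sqr_ge0 a; have hb := sqr_ge0 b.
have a2 : a ^+ 2 = 0 by lra.
have b2 : b ^+ 2 = 0 by lra.
by split; [move/eqP: a2 | move/eqP: b2]; rewrite expf_eq0 /= => /eqP.
Qed.

(* Off Z, a critical point of L has x1 = y1 = 0 and x2 = y2 = 0: test dL on
   the tangent vectors (-x z, -y z, x^2 + y^2) of each sphere. *)
Lemma crit_L_axes (R1 R2 : R) p : 0 < R1 -> 0 < R2 -> co6 p 5 != 0 ->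
  (forall w, tangentM p w -> 'D_w (bval (Lsys R1 R2)) p = 0) ->
  [/\ co6 p 0 = 0, co6 p 1 = 0, co6 p 3 = 0 & co6 p 4 = 0].
Proof.
move=> hR1 hR2 h5 hL.
have dv w := @derive_val _ _ _ _ _ _ _ (isd_bvalL R1 R2 w h5).
set w1 := mk6 (- (co6 p 0 * co6 p 2)) (- (co6 p 1 * co6 p 2))
              (co6 p 0 ^+ 2 + co6 p 1 ^+ 2) 0 0 0.
have t1 : tangentM p w1 by rewrite /tangentM /w1 !co6_mk6 //=; split; ring.
have := hL w1 t1; rewrite dv /w1 !co6_mk6 //= mul0r mulr0 addr0 => /eqP.
rewrite mulf_eq0 (gt_eqF hR1) /= => /eqP /sqr_sum_eq0 [p0 p1].
set w2 := mk6 0 0 0 (- (co6 p 3 * co6 p 5)) (- (co6 p 4 * co6 p 5))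
              (co6 p 3 ^+ 2 + co6 p 4 ^+ 2).
have t2 : tangentM p w2 by rewrite /tangentM /w2 !co6_mk6 //=; split; ring.
have := hL w2 t2; rewrite dv /w2 !co6_mk6 //= mulr0 add0r => /eqP.
rewrite mulf_eq0 (gt_eqF hR2) /= mulf_eq0 invr_eq0 (negbTE h5) orbF.
by move=> /eqP /sqr_sum_eq0 [p3 p4].
Qed.

Lemma unit_coord (a : R) : a ^+ 2 = 1 -> a = sgnb R (a == 1).
Proof.
move=> h; have : (a - 1) * (a + 1) = 0 by rewrite -subr_sqr h expr1n subrr.
move/eqP; rewrite mulf_eq0 => /orP [] /eqP h'.
  have -> : a = 1 by lra.
  by rewrite /sgnb eqxx.
have -> : a = -1 by lra.
by rewrite /sgnb; case: eqP.
Qed.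

Lemma row6_eq p q : (forall k : nat, (k < 6)%N -> co6 p k = co6 q k) -> p = q.
Proof.
move=> h; apply/rowP => j; rewrite -(inord_val j).
by have := h j (ltn_ord j); rewrite /co6.
Qed.

(* Every fixed point is a pole: on Z the log-coefficient R2 of L makes
   dL nonzero; off Z use crit_L_axes and the sphere equations. *)
Lemma fixed_point_pole (R1 R2 t : R) p : 0 < R1 -> 0 < R2 ->
  fixed_point R1 R2 t p -> exists e1 e2 : bool, p = pole R e1 e2.
Proof.
move=> hR1 hR2 [[hM1 hM2] [hL _]]; move: hL; rewrite /b_crit.
case: ifP => h5; last by move=> [hlog _]; move: hR2; rewrite -hlog ltxx.
move=> /(crit_L_axes hR1 hR2 h5) [p0 p1 p3 p4].
have z1 : co6 p 2 ^+ 2 = 1 by move: hM1; rewrite p0 p1 expr0n /= !add0r.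
have z2 : co6 p 5 ^+ 2 = 1 by move: hM2; rewrite p3 p4 expr0n /= !add0r.
exists (co6 p 2 == 1), (co6 p 5 == 1); apply: row6_eq => k hk.
rewrite /pole co6_mk6 //.
by move: hk; case: k => [|[|[|[|[|[|k]]]]]] //= _; apply: unit_coord.
Qed.

(* At a pole every tangent vector has dz1 = dz2 = 0, so dL = dH = 0. *)
Lemma pole_fixed_point (R1 R2 t : R) e1 e2 : fixed_point R1 R2 t (pole R e1 e2).
Proof.
have c5 : co6 (pole R e1 e2) 5 != 0 by rewrite /pole co6_mk6 // sgnb_neq0.
have tg w : tangentM (pole R e1 e2) w -> co6 w 2 = 0 /\ co6 w 5 = 0.
  rewrite /tangentM /pole !co6_mk6 //= !mulr0 !add0r => -[/eqP h1 /eqP h2].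
  move: h1 h2; rewrite !mulf_eq0 !(negbTE (sgnb_neq0 _ _)) !orbF.
  by move=> /eqP -> /eqP ->.
split; first by rewrite /onM /pole !co6_mk6 //= expr0n /= !add0r !expr2 !sgnb2.
split; rewrite /b_crit c5 => w /tg [w2 w5].
  rewrite (@derive_val _ _ _ _ _ _ _ (isd_bvalL R1 R2 w c5)) w2 w5.
  by rewrite mul0r !mulr0 addr0.
rewrite (@derive_val _ _ _ _ _ _ _ (isd_bvalH t (pole R e1 e2) w)) w2 w5.
by rewrite /pole !co6_mk6 //=; ring.
Qed.

End FixedPoints.

Section PoleTypes.
Variable R : realType.
Variables (R1 R2 t : R).
Hypotheses (hR1 : 0 < R1) (hR12 : R1 < R2) (ht0 : 0 <= t) (ht1 : t <= 1).

(* p_{+,+}, p_{+,-} and p_{-,+}: disc M > 0 for every t in [0,1]. *)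
Lemma pole_generic_type e1 e2 : e1 || e2 ->
  nondeg_fixed_point R1 R2 t e1 e2 /\ elliptic_elliptic R1 R2 t e1 e2.
Proof.
move=> he; have hR2 : 0 < R2 by apply: lt_trans hR1 hR12.
have hd : 0 < discM R1 R2 t e1 e2.
  apply: (discM_pos hR1 hR2); case: e1 he => [_|/= ->].
    exact: discN_pos_plus.
  exact: discN_pos_minus_plus.
by split; [apply: nondeg_of_disc; rewrite ?gt_eqF | exact: EE_of_disc].
Qed.

(* p_{-,-} for t outside [t^-, t^+]: disc M > 0. *)
Lemma pole_mm_outside : t < t_minus R1 R2 \/ t_plus R1 R2 < t ->
  nondeg_fixed_point R1 R2 t false false /\ elliptic_elliptic R1 R2 t false false.
Proof.
move=> ht; have hR2 : 0 < R2 by apply: lt_trans hR1 hR12.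
have [_ tmp /(_ t) [k [k0 hd]]] := discM_minus_minus hR1 hR12.
have dpos : 0 < discM R1 R2 t false false.
  rewrite hd pmulr_rgt0 //; case: ht => h.
    by rewrite mulr_gt0 // subr_gt0 //; apply: lt_trans h tmp.
  by rewrite -mulrNN mulr_gt0 // oppr_gt0 subr_lt0 //; apply: lt_trans tmp h.
by split; [apply: nondeg_of_disc; rewrite ?gt_eqF | exact: EE_of_disc].
Qed.

(* p_{-,-} for t^- < t < t^+: disc M < 0. *)
Lemma pole_mm_inside : t_minus R1 R2 < t < t_plus R1 R2 ->
  nondeg_fixed_point R1 R2 t false false /\ focus_focus R1 R2 t false false.
Proof.
move=> /andP [h1 h2]; have hR2 : 0 < R2 by apply: lt_trans hR1 hR12.
have [_ _ /(_ t) [k [k0 hd]]] := discM_minus_minus hR1 hR12.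
have dneg : discM R1 R2 t false false < 0.
  by rewrite hd pmulr_rlt0 // pmulr_llt0 ?subr_gt0 // subr_lt0.
by split; [apply: nondeg_of_disc; rewrite ?lt_eqF | exact: FF_of_disc].
Qed.

(* p_{-,-} for t = t^- or t^+: disc M = 0, while t > 0. *)
Lemma pole_mm_boundary : t = t_minus R1 R2 \/ t = t_plus R1 R2 ->
  ~ nondeg_fixed_point R1 R2 t false false.
Proof.
move=> ht; have hR2 : 0 < R2 by apply: lt_trans hR1 hR12.
have [tm0 tmp /(_ t) [k [_ hd]]] := discM_minus_minus hR1 hR12.
apply: degen_of_disc => //.
  by rewrite hd; case: ht => ->; rewrite subrr !(mul0r, mulr0).
by case: ht => ->; rewrite gt_eqF //; apply: lt_trans tm0 tmp.
Qed.

End PoleTypes.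

Theorem proposition5p8 (R : realType) (R1 R2 t : R) :
  0 < R1 -> R1 < R2 -> 0 <= t -> t <= 1 ->
  (forall p : 'rV[R]_6, fixed_point R1 R2 t p <-> exists e1 e2 : bool, p = pole R e1 e2) /\
  (forall e1 e2 : bool, e1 || e2 ->
     nondeg_fixed_point R1 R2 t e1 e2 /\ elliptic_elliptic R1 R2 t e1 e2) /\
  ((t < t_minus R1 R2 \/ t_plus R1 R2 < t) ->
     nondeg_fixed_point R1 R2 t false false /\ elliptic_elliptic R1 R2 t false false) /\
  (t_minus R1 R2 < t < t_plus R1 R2 ->
     nondeg_fixed_point R1 R2 t false false /\ focus_focus R1 R2 t false false) /\
  ((t = t_minus R1 R2 \/ t = t_plus R1 R2) -> ~ nondeg_fixed_point R1 R2 t false false).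
Proof.
move=> hR1 hR12 ht0 ht1; have hR2 : 0 < R2 by apply: lt_trans hR1 hR12.
split.
  move=> p; split; first exact: fixed_point_pole.
  by move=> [e1 [e2 ->]]; exact: pole_fixed_point.
split; first exact: pole_generic_type.
split; first exact: pole_mm_outside.
split; first exact: pole_mm_inside.
exact: pole_mm_boundary.
Qed.
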